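(* Let $\mathbb{F}_q$ have characteristic $p\neq2$, $f(X)=aX^2+c\in\mathbb{F}_q[X]$ with $a\ne0$, $r\ge1$, $k\ge 2$, and let $(x_1,\dots,x_k)\in\overline{\mathbb{F}_q}^{\,k}$ satisfy $f^r(x_1)=\dots=f^r(x_k)$. For distinct $i,j\in\{1,\dots,k\}$ let $d(i,j)=d(j,i)$ be the smallest $d\in\{-1,0,1,\dots,r-1\}$ with $\phi(x_i,x_j;d)=0$ (such $d$ exists). Then the complete weighted graph on $\{1,\dots,k\}$ with edge weights $d(i,j)$ is proper.
   Context: Iterates: $f^0(X)=X$, $f^{j+1}(X)=f(f^j(X))$. Define $\phi(X,Y;-1)=X-Y$ and $\phi(X,Y;d)=f^d(X)+f^d(Y)$ for integers $d\ge 0$. A $(D,k)$-graph is a weighted graph on $k$ vertices in which each edge $ij$ carries an integer weight $d(i,j)\in[-1,D]$; it is complete if every pair of distinct vertices is joined by an edge. A complete $(D,k)$-graph is proper if for all distinct vertices $a,b,c$ with $d(a,b)\le d(a,c)\le d(b,c)$ one has either $d(a,b)=d(a,c)=d(b,c)=-1$, or $d(a,b)<d(a,c)=d(b,c)$. *)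

From HB Require Import structures.
From mathcomp Require Import all_boot all_order all_algebra all_field.
Set Implicit Arguments. Unset Strict Implicit. Unset Printing Implicit Defensive.
Import Order.TTheory GRing.Theory Num.Theory.
Local Open Scope ring_scope.

Definition fquad {L : fieldType} (a c : L) (x : L) : L := a * x ^+ 2 + c.
Definition fiter {L : fieldType} (a c : L) (n : nat) (x : L) : L :=
  iter n (fquad a c) x.

(* phi(X,Y;-1) = X - Y ; phi(X,Y;d) = f^d(X) + f^d(Y) for d >= 0.
   (d is an integer; only d >= -1 is ever used.) *)
Definition phi {L : fieldType} (a c : L) (x y : L) (d : int) : L :=
  if (d < 0)%R then x - y else fiter a c `|d|%N x + fiter a c `|d|%N y.

Definition proper_graph (k : nat) (w : 'I_k -> 'I_k -> int) : Prop :=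
  forall u v t : 'I_k, u != v -> u != t -> v != t ->
    (w u v <= w u t)%R -> (w u t <= w v t)%R ->
    (w u v = -1 /\ w u t = -1 /\ w v t = -1)
    \/ ((w u v < w u t)%R /\ w u t = w v t).

Definition is_min_phi_zero {L : fieldType} (a c : L) (r : nat) (x y : L)
  (d : int) : Prop :=
  [/\ (-1 <= d)%R, (d <= (r%:Z - 1))%R, phi a c x y d = 0 &
      forall e : int, (-1 <= e)%R -> (e < d)%R -> phi a c x y e <> 0].

From HB Require Import structures.
From mathcomp Require Import all_boot all_order all_algebra all_field.
From mathcomp Require Import zify.
Import Order.TTheory GRing.Theory Num.Theory.
Local Open Scope ring_scope.

Set Implicit Arguments. Unset Strict Implicit.

(* Since f(u) = f(v) iff u = v or u + v = 0, the weight d(x,y) is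
   g(x,y) - 1, where g(x,y) is the first n with f^n(x) = f^n(y).  Collision at
   level n is an equivalence relation stable under increasing n, so
   g(v,t) <= max(g(u,v), g(u,t)): among three first-collision times the two
   largest agree.  If all three equal n + 1 > 0, the three points at level n
   are pairwise distinct but pairwise opposite, which is impossible: from
   y_u + y_v = 0 = y_u + y_t we get y_v = y_t. *)

Section FirstCollision.
Variables (L : fieldType) (a c : L).
Hypothesis a_neq0 : a != 0.

Lemma fiterS n x : fiter a c n.+1 x = fquad a c (fiter a c n x).
Proof. by rewrite /fiter iterS. Qed.

Lemma fquad_eq u v : fquad a c u = fquad a c v -> u = v \/ u + v = 0.
Proof.
rewrite /fquad => /addIr /(mulfI a_neq0) /eqP.
by rewrite eqf_sqr => /orP[/eqP-> | /eqP->]; [left | right; rewrite addNr].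
Qed.

Definition collide (x y : L) (n : nat) : bool := fiter a c n x == fiter a c n y.

Lemma collide_mono x y m n : (m <= n)%N -> collide x y m -> collide x y n.
Proof. by move=> /subnK <-; rewrite /collide /fiter !iterD => /eqP ->. Qed.

Lemma collide_trans x y z n : collide x y n -> collide x z n -> collide y z n.
Proof. by rewrite /collide => /eqP <- /eqP ->. Qed.

Definition first_collision (x y : L) (g : nat) : Prop :=
  collide x y g /\ forall m, (m < g)%N -> ~~ collide x y m.

Lemma first_collision_exists x y r :
  collide x y r -> exists2 g, first_collision x y g & (g <= r)%N.
Proof.
move=> xy_r; have [g xy_g g_min] := ex_minnP (ex_intro (collide x y) r xy_r).
exists g; last exact: g_min.
by split=> // m lt_mg; apply/negP => /g_min; rewrite leqNgt lt_mg.
Qed.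

Lemma first_collision_le x y g n : first_collision x y g -> collide x y n -> (g <= n)%N.
Proof. by move=> [_ g_min] xy_n; rewrite leqNgt; apply/negP => /g_min; rewrite xy_n. Qed.

Lemma first_collisionS_opp x y n :
  first_collision x y n.+1 -> fiter a c n x + fiter a c n y = 0.
Proof.
move=> [xy_n1 xy_min]; move: xy_n1; rewrite /collide !fiterS => /eqP /fquad_eq [xy_n|] //.
by move: (xy_min n (ltnSn n)); rewrite /collide xy_n eqxx.
Qed.

Lemma phi_eq0_collide x y (e : int) :
  -1 <= e -> phi a c x y e = 0 -> collide x y `|(e + 1)%R|%N.
Proof.
rewrite /phi /collide; case: ltrP => e_sign e_ge phi0.
  have -> : e = -1 by lia.
  by move: phi0 => /eqP; rewrite subr_eq0.
have -> : `|(e + 1)%R|%N = `|e|%N.+1 by lia.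
rewrite !fiterS /fquad.
have -> : fiter a c `|e| y = - fiter a c `|e| x.
  by apply/eqP; rewrite -addr_eq0 addrC phi0.
by rewrite sqrrN.
Qed.

Lemma first_collision_min_phi_zero x y r g :
  first_collision x y g -> (g <= r)%N -> is_min_phi_zero a c r x y (g%:Z - 1).
Proof.
move=> xy_g le_gr; split; [lia | lia | |].
- rewrite /phi; case: g xy_g le_gr => [|n] xy_g _.
    by apply/eqP; rewrite subr_eq0; case: xy_g.
  have -> : ((n.+1)%:Z - 1 < 0) = false by lia.
  have -> : `|(n.+1)%:Z - 1|%N = n by lia.
  exact: first_collisionS_opp.
- move=> e e_ge e_lt /(phi_eq0_collide e_ge) /(first_collision_le xy_g); lia.
Qed.

Lemma first_collision_triangle u v t g1 g2 g3 :
  first_collision u v g1 -> first_collision u t g2 -> first_collision v t g3 ->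
  (g1 <= g2)%N -> (g2 <= g3)%N ->
  [/\ g1 = 0, g2 = 0 & g3 = 0]%N \/ (g1 < g2)%N /\ g2 = g3.
Proof.
move=> uv ut vt le12 le23.
have vt_g2 : collide v t g2 by apply: collide_trans (collide_mono le12 uv.1) ut.1.
have e23 : g2 = g3 by apply/eqP; rewrite eqn_leq le23 (first_collision_le vt).
case: (ltnP g1 g2) => [lt12 | le21]; first by right.
have e12 : g1 = g2 by apply/eqP; rewrite eqn_leq le12.
subst g1 g3; case: g2 {le12 le23 le21 vt_g2} uv ut vt => [|n] uv ut vt; first by left.
exfalso; move: vt => [_ /(_ n (ltnSn n)) /negP]; apply; apply/eqP.
apply: (addrI (fiter a c n u)).
by rewrite (first_collisionS_opp uv) (first_collisionS_opp ut).
Qed.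

End FirstCollision.

Lemma min_phi_zero_unique (L : fieldType) (a c : L) r x y d d' :
  is_min_phi_zero a c r x y d -> is_min_phi_zero a c r x y d' -> d = d'.
Proof.
move=> [d_ge _ phi_d d_min] [d'_ge _ phi_d' d'_min].
by case: (ltrgtP d d') => // lt; [case: (d'_min d) | case: (d_min d')].
Qed.

Theorem lemma2 (F : finFieldType) (L : closedFieldType)
  (iota : {rmorphism F -> L})
  (HalgL : forall z : L, exists P : {poly F}, P != 0 /\ root (map_poly iota P) z)
  (Hchar : (2%N \notin [pchar F]))
  (a c : F) (Ha : a != 0) (r k : nat) (Hr : (1 <= r)%N) (Hk : (2 <= k)%N)
  (x : 'I_k -> L)
  (Hx : forall i j : 'I_k, fiter (iota a) (iota c) r (x i) = fiter (iota a) (iota c) r (x j)) :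
  (forall i j : 'I_k, i != j ->
     exists d : int, is_min_phi_zero (iota a) (iota c) r (x i) (x j) d)
  /\
  (forall w : 'I_k -> 'I_k -> int,
     (forall i j : 'I_k, i != j ->
        is_min_phi_zero (iota a) (iota c) r (x i) (x j) (w i j)) ->
     proper_graph w).
Proof.
have a_neq0 : iota a != 0 by rewrite fmorph_eq0.
have first_time i j : exists2 g, first_collision (iota a) (iota c) (x i) (x j) g & (g <= r)%N.
  by apply: first_collision_exists; rewrite /collide (Hx i j).
split=> [i j _ | w w_min u v t uv ut vt].
  have [g ij_g le_gr] := first_time i j.
  by exists (g%:Z - 1); apply: first_collision_min_phi_zero.
have w_eq i j (ij : i != j) :
  exists2 g, first_collision (iota a) (iota c) (x i) (x j) g & w i j = g%:Z - 1.
  have [g ij_g le_gr] := first_time i j; exists g => //.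
  exact: min_phi_zero_unique (w_min i j ij) (first_collision_min_phi_zero _ ij_g le_gr).
have [g1 uv_g1 ->] := w_eq u v uv.
have [g2 ut_g2 ->] := w_eq u t ut.
have [g3 vt_g3 ->] := w_eq v t vt.
rewrite !lerD2r !lez_nat => le12 le23.
have [[-> -> ->]|[lt12 ->]] := first_collision_triangle a_neq0 uv_g1 ut_g2 vt_g3 le12 le23.
- by left; rewrite sub0r.
- by right; split; [lia |].
Qed.
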